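(* Let $X$ and $Q$ be defined as follows (indexed by layers $\ell\ge2$ and positions $0\le j\le n_\ell-1$, and ordered lexicographically in $(\ell,j)$, with $\vec q_0=\vec 0$ prepended to $Q$). Let $n_\ell:=\ell\lceil\ln^2\ell\rceil+1$, $\theta_\ell:=\frac{\pi}{2(n_\ell-1)}$, $\vec x_{\ell,j}:=(\cos(j\theta_\ell),\sin(j\theta_\ell))$ for even $\ell$ and $\vec x_{\ell,j}:=(\sin(j\theta_\ell),\cos(j\theta_\ell))$ for odd $\ell$. Let $\alpha:=\sum_{\ell=2}^\infty\frac1{\ell\ln^2\ell}$, $z_\ell:=\frac1\alpha\sum_{m=2}^\ell\frac1{m\ln^2 m}$ (so $z_1=0$), $\delta_\ell:=z_\ell-z_{\ell-1}=\frac{1}{\alpha\ell\ln^2\ell}$, $z_{\ell,j}:=1-\delta_\ell\cot((j+1)\theta_\ell)$ for $j<n_\ell-1$ and $z_{\ell,n_\ell-1}:=1$. For even $\ell$, $\vec q_{\ell,j}:=(z_\ell,z_{\ell,j})$; for odd $\ell$, $\vec q_{\ell,j}$ is any maximizer of $\vec x_{\ell,j}\cdot\vec q_{\ell',j'}$ over all $(\ell',j')$ with $\ell'<\ell$. Then $\mathrm{MenuGap}(X,Q)=\infty$.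
   Context: MenuGap: Let $X=(\vec x_i)_{i=1}^N$ be an ordered sequence of nonzero points of $\mathbb{R}^k_{\ge0}$ ($N$ finite or $+\infty$), and $Q=(\vec q_i)_{i=0}^N$ an ordered sequence of points of $[0,1]^k$ with $\vec q_0=(0,\dots,0)$. Define $\mathrm{gap}_i^{X,Q}:=\min_{0\le j<i}(\vec q_i-\vec q_j)\cdot\vec x_i$ and $\mathrm{MenuGap}(X,Q):=\sum_{i=1}^N \mathrm{gap}_i^{X,Q}/\|\vec x_i\|_1$. *)

From Stdlib Require Import Reals Lra Lia Arith.
From Coquelicot Require Import Coquelicot.
Open Scope R_scope.

Fixpoint rsum (f : nat -> R) (n : nat) : R :=
  match n with O => 0 | S m => rsum f m + f m end.

Definition dotk (k : nat) (u v : nat -> R) : R := rsum (fun t => u t * v t) k.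
Definition norm1 (k : nat) (u : nat -> R) : R := rsum (fun t => Rabs (u t)) k.

Fixpoint fmin (n : nat) (f : nat -> R) : R :=
  match n with O => f O | S m => Rmin (fmin m f) (f (S m)) end.

(* X i (i >= 1) are the points x_i, Q i (i >= 0) the points q_i.
   gap_i = min_{0 <= j < i} (q_i - q_j) . x_i   (for i >= 1) *)
Definition gap (k : nat) (X Q : nat -> nat -> R) (i : nat) : R :=
  fmin (i - 1) (fun j => dotk k (fun t => Q i t - Q j t) (X i)).

Definition MenuGap_partial (k : nat) (X Q : nat -> nat -> R) (N : nat) : R :=
  rsum (fun i => gap k X Q (S i) / norm1 k (X (S i))) N.

Definition MenuGap_is (k : nat) (X Q : nat -> nat -> R) (v : Rbar) : Prop :=
  is_lim_seq (MenuGap_partial k X Q) v.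

(* ceiling of a real, as a natural number (for nonnegative arguments) *)
Definition nceil (x : R) : nat := Z.to_nat (- Int_part (- x)).

Definition vec2 (a b : R) : nat -> R :=
  fun t => match t with O => a | 1%nat => b | _ => 0 end.

Definition nl (l : nat) : nat := (l * nceil (ln (INR l) ^ 2) + 1)%nat.

Definition theta (l : nat) : R := PI / (2 * INR (nl l - 1)).

Definition xv (l j : nat) : nat -> R :=
  if Nat.even l then vec2 (cos (INR j * theta l)) (sin (INR j * theta l))
  else vec2 (sin (INR j * theta l)) (cos (INR j * theta l)).

Definition harm_term (m : nat) : R :=
  if (2 <=? m)%nat then 1 / (INR m * ln (INR m) ^ 2) else 0.

Definition alpha : R := Series harm_term.

Definition zl (l : nat) : R := / alpha * rsum harm_term (S l).

Definition delta (l : nat) : R := zl l - zl (l - 1).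

Definition zlj (l j : nat) : R :=
  if (S j <? nl l)%nat
  then 1 - delta l * (cos (INR (S j) * theta l) / sin (INR (S j) * theta l))
  else 1.

Definition qeven (l j : nat) : nat -> R := vec2 (zl l) (zlj l j).

(* lexicographic enumeration of pairs (l, j), l >= 2, 0 <= j < n_l *)
Fixpoint pos (i : nat) : nat * nat :=
  match i with
  | O => (2%nat, O)
  | S i' => let (l, j) := pos i' in
            if (S j <? nl l)%nat then (l, S j) else (S l, O)
  end.

(* flattened sequences: X_i = x_{pos(i-1)} for i >= 1; Q_0 = 0, Q_i = q_{pos(i-1)} *)
Definition Xseq (i : nat) : nat -> R := let (l, j) := pos (i - 1) in xv l j.
Definition Qseq (q : nat -> nat -> nat -> R) (i : nat) : nat -> R :=
  match i with
  | O => fun _ => 0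
  | S i' => let (l, j) := pos i' in q l j
  end.

Definition q_admissible (q : nat -> nat -> nat -> R) : Prop :=
  (forall l j, (2 <= l)%nat -> Nat.even l = true -> (j < nl l)%nat ->
     q l j = qeven l j) /\
  (forall l j, (3 <= l)%nat -> Nat.odd l = true -> (j < nl l)%nat ->
     exists l' j', (2 <= l')%nat /\ (l' < l)%nat /\ (j' < nl l')%nat /\
       q l j = q l' j' /\
       forall l'' j'', (2 <= l'')%nat -> (l'' < l)%nat -> (j'' < nl l'')%nat ->
         dotk 2 (xv l j) (q l'' j'') <= dotk 2 (xv l j) (q l' j')).

From Pilot Require Import Defs.
From Stdlib Require Import Reals Lra Lia.
From Coquelicot Require Import Coquelicot.
Open Scope R_scope.

(** All gaps are nonnegative: on an odd layer each q_(l,j) maximizes the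
    utility x_(l,j).q over everything offered before it, and on an even layer
    the points of earlier layers lie below (z_(l-1), 1).  On an even layer the
    cotangent profile of z_(l,j) makes the gap of x_(l,j) at least
    delta_l * sin theta_l / sin ((j+1) theta_l) >= delta_l / (j+1).  As
    ||x_(l,j)||_1 <= 2, summing over j < l shows that layer l contributes at least
    delta_l ln l / 2 = 1 / (2 alpha l ln l) >= (ln ln (l+2) - ln ln l) / (4 alpha),
    and these increments telescope over the even layers to ln ln l -> oo. *)

Lemma ln_le_sub_1 x : 0 < x -> ln x <= x - 1.
Proof. intros Hx. pose proof (exp_ineq1_le (ln x)) as H. rewrite exp_ln in H; lra. Qed.

Lemma ln_sub_le x y : 0 < x -> 0 < y -> ln y - ln x <= (y - x) / x.
Proof.
  intros Hx Hy. rewrite <- ln_div by lra.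
  replace ((y - x) / x) with (y / x - 1) by (field; lra).
  apply ln_le_sub_1, Rdiv_lt_0_compat; lra.
Qed.

Lemma ln_sub_ge x y : 0 < x -> 0 < y -> (y - x) / y <= ln y - ln x.
Proof.
  intros Hx Hy. pose proof (ln_sub_le y x Hy Hx).
  replace ((y - x) / y) with (- ((x - y) / y)) by (field; lra). lra.
Qed.

Lemma two_le_INR m : (2 <= m)%nat -> 2 <= INR m.
Proof. intros H. apply (le_INR 2) in H. simpl in H. lra. Qed.

Lemma ln_INR_pos m : (2 <= m)%nat -> 0 < ln (INR m).
Proof. intros H. apply two_le_INR in H. rewrite <- ln_1. apply ln_increasing; lra. Qed.

Lemma ln_ln_INR_unbounded y : exists N, forall n, (N <= n)%nat -> y < ln (ln (INR n)).
Proof.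
  pose proof is_lim_seq_INR as HI. apply is_lim_seq_spec in HI.
  destruct (HI (exp (exp y))) as [N HN]. exists N. intros n Hn.
  specialize (HN n Hn).
  rewrite <- (ln_exp y). apply ln_increasing; [apply exp_pos|].
  rewrite <- (ln_exp (exp y)). apply ln_increasing; [apply exp_pos|lra].
Qed.

Lemma ln_ln_add_2_sub_le l : (2 <= l)%nat ->
  ln (ln (INR l + 2)) - ln (ln (INR l)) <= 2 / (INR l * ln (INR l)).
Proof.
  intros Hl. pose proof (two_le_INR l Hl). pose proof (ln_INR_pos l Hl).
  pose proof (ln_sub_le (INR l) (INR l + 2) ltac:(lra) ltac:(lra)) as Hin.
  assert (ln (INR l) <= ln (INR l + 2)) by (apply ln_le; lra).
  pose proof (ln_sub_le (ln (INR l)) (ln (INR l + 2)) ltac:(lra) ltac:(lra)) as Hout.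
  replace (INR l + 2 - INR l) with 2 in Hin by ring.
  replace (2 / (INR l * ln (INR l))) with (2 / INR l / ln (INR l)) by (field; lra).
  eapply Rle_trans; [exact Hout|].
  apply Rmult_le_compat_r; [apply Rlt_le, Rinv_0_lt_compat|]; lra.
Qed.

Lemma rsum_nonneg (f : nat -> R) n : (forall i, 0 <= f i) -> 0 <= rsum f n.
Proof. intros Hf. induction n; simpl; [lra|]. pose proof (Hf n). lra. Qed.

Lemma rsum_le_n (f : nat -> R) a b : (forall i, 0 <= f i) -> (a <= b)%nat -> rsum f a <= rsum f b.
Proof. intros Hf H. induction H; [lra|]. simpl. pose proof (Hf m). lra. Qed.

Lemma rsum_le_compat (f g : nat -> R) n :
  (forall i, (i < n)%nat -> f i <= g i) -> rsum f n <= rsum g n.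
Proof.
  induction n as [|n IH]; intros H; simpl; [lra|].
  pose proof (H n ltac:(lia)). pose proof (IH ltac:(intros; apply H; lia)). lra.
Qed.

Lemma rsum_add_n (f : nat -> R) a b :
  rsum f (a + b) = rsum f a + rsum (fun j => f (a + j)%nat) b.
Proof.
  induction b as [|b IH]; simpl.
  - rewrite Nat.add_0_r. ring.
  - rewrite Nat.add_succ_r. simpl. rewrite IH. ring.
Qed.

Lemma rsum_scal_l c (f : nat -> R) n : rsum (fun j => c * f j) n = c * rsum f n.
Proof. induction n as [|n IH]; simpl; [ring|]. rewrite IH. ring. Qed.

Lemma ln_le_harmonic n : ln (INR n + 1) <= rsum (fun j => / INR (S j)) n.
Proof.
  induction n as [|n IH]; cbn [rsum].
  - simpl. rewrite Rplus_0_l, ln_1. lra.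
  - pose proof (pos_INR n). rewrite S_INR in *.
    pose proof (ln_sub_le (INR n + 1) (INR n + 1 + 1) ltac:(lra) ltac:(lra)) as Hstep.
    replace ((INR n + 1 + 1 - (INR n + 1)) / (INR n + 1)) with (/ (INR n + 1)) in Hstep
      by (field; lra).
    lra.
Qed.

Lemma fmin_glb n (f : nat -> R) b : (forall i, (i <= n)%nat -> b <= f i) -> b <= fmin n f.
Proof.
  induction n as [|n IH]; intros H; simpl.
  - apply H; lia.
  - apply Rmin_glb; [apply IH; intros; apply H|apply H]; lia.
Qed.

Lemma dotk_2 u v : dotk 2 u v = u 0%nat * v 0%nat + u 1%nat * v 1%nat.
Proof. unfold dotk. simpl. ring. Qed.

Lemma norm1_2 u : norm1 2 u = Rabs (u 0%nat) + Rabs (u 1%nat).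
Proof. unfold norm1. simpl. ring. Qed.

Definition cot (x : R) : R := cos x / sin x.

Lemma sin_INR_mult_le k x : 0 <= x -> INR k * x <= PI / 2 -> sin (INR k * x) <= INR k * sin x.
Proof.
  intros Hx. induction k as [|k IH]; intros Hk.
  - simpl. rewrite Rmult_0_l, sin_0. lra.
  - rewrite S_INR in *. pose proof (pos_INR k). pose proof PI_RGT_0.
    assert (Hkx : INR k * x <= PI / 2) by nra.
    specialize (IH Hkx).
    replace ((INR k + 1) * x) with (INR k * x + x) by ring. rewrite sin_plus.
    assert (0 <= sin (INR k * x)) by (apply sin_ge_0; nra).
    assert (0 <= sin x) by (apply sin_ge_0; nra).
    pose proof (COS_bound x). pose proof (COS_bound (INR k * x)). nra.
Qed.

Lemma cot_antitone a b : 0 < a -> a <= b -> b < PI -> cot b <= cot a.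
Proof.
  intros Ha Hab Hb. unfold cot.
  assert (0 < sin a) by (apply sin_gt_0; lra).
  assert (0 < sin b) by (apply sin_gt_0; lra).
  assert (Hba : 0 <= sin (b - a)) by (apply sin_ge_0; lra).
  rewrite sin_minus in Hba.
  apply (Rmult_le_reg_r (sin a * sin b)); [nra|].
  replace (cos b / sin b * (sin a * sin b)) with (cos b * sin a) by (field; lra).
  replace (cos a / sin a * (sin a * sin b)) with (cos a * sin b) by (field; lra).
  lra.
Qed.

Lemma cos_sub_sin_cot a t : sin (a + t) <> 0 ->
  cos a - sin a * cot (a + t) = sin t / sin (a + t).
Proof.
  intros H. unfold cot. replace (sin t) with (sin ((a + t) - a)) by (f_equal; ring).
  rewrite sin_minus. field. exact H.
Qed.

Fixpoint layer_start (l : nat) : nat :=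
  match l with O => O | S m => if (2 <=? m)%nat then (layer_start m + nl m)%nat else O end.

Lemma layer_start_S l : (2 <= l)%nat -> layer_start (S l) = (layer_start l + nl l)%nat.
Proof. intros H. destruct l as [|[|l]]; [lia|lia|reflexivity]. Qed.

Lemma layer_start_lt l1 l : (2 <= l1)%nat -> (l1 < l)%nat ->
  (layer_start l1 + nl l1 <= layer_start l)%nat.
Proof. intros Hl1 Hlt. induction Hlt; rewrite layer_start_S by lia; lia. Qed.

Lemma pos_spec i l j : Defs.pos i = (l, j) ->
  (2 <= l)%nat /\ (j < nl l)%nat /\ i = (layer_start l + j)%nat.
Proof.
  revert l j. induction i as [|i IH]; intros l j E; simpl in E.
  - inversion E; subst. unfold nl. simpl. lia.
  - destruct (Defs.pos i) as [l0 j0].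
    destruct (IH l0 j0 eq_refl) as [Hl0 [Hj0 ->]].
    destruct (S j0 <? nl l0)%nat eqn:Hlt; inversion E; subst.
    + apply Nat.ltb_lt in Hlt. lia.
    + apply Nat.ltb_ge in Hlt. rewrite layer_start_S by lia. unfold nl at 1. lia.
Qed.

Lemma pos_layer_start l j : (2 <= l)%nat -> (j < nl l)%nat ->
  Defs.pos (layer_start l + j) = (l, j).
Proof.
  intros Hl Hj. destruct (Defs.pos (layer_start l + j)) as [l1 j1] eqn:E.
  destruct (pos_spec _ _ _ E) as [Hl1 [Hj1 Ei]].
  destruct (Nat.lt_trichotomy l1 l) as [H|[->|H]].
  - pose proof (layer_start_lt l1 l Hl1 H). lia.
  - f_equal. lia.
  - pose proof (layer_start_lt l l1 Hl H). lia.
Qed.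

Lemma pos_lt_lex i l j i1 l1 j1 : Defs.pos i = (l, j) -> Defs.pos i1 = (l1, j1) -> (i1 < i)%nat ->
  (2 <= l1)%nat /\ (j1 < nl l1)%nat /\ ((l1 < l)%nat \/ l1 = l /\ (j1 < j)%nat).
Proof.
  intros E E1 H.
  destruct (pos_spec _ _ _ E) as [Hl [Hj ->]]. destruct (pos_spec _ _ _ E1) as [Hl1 [Hj1 ->]].
  do 2 (split; [lia|]).
  destruct (Nat.lt_trichotomy l1 l) as [H2|[H2|H2]]; [left; lia|right; subst; lia|].
  pose proof (layer_start_lt l l1 Hl H2). lia.
Qed.

Lemma Xseq_S i l j : Defs.pos i = (l, j) -> Xseq (S i) = xv l j.
Proof. intros E. unfold Xseq. rewrite Nat.sub_1_r. simpl. rewrite E. reflexivity. Qed.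

Lemma Qseq_S q i l j : Defs.pos i = (l, j) -> Qseq q (S i) = q l j.
Proof. intros E. simpl. rewrite E. reflexivity. Qed.

Lemma gap_at q i l j : Defs.pos i = (l, j) ->
  gap 2 Xseq (Qseq q) (S i) =
  fmin i (fun i' => dotk 2 (fun t => q l j t - Qseq q i' t) (xv l j)).
Proof.
  intros E. unfold gap. rewrite Nat.sub_1_r. simpl Nat.pred.
  rewrite (Xseq_S i l j E), (Qseq_S q i l j E). reflexivity.
Qed.

Lemma nceil_pos x : 0 < x -> (1 <= nceil x)%nat.
Proof.
  intros Hx. unfold nceil. destruct (base_Int_part (- x)) as [H1 _].
  assert (IZR (Int_part (- x)) < IZR 0) by (simpl; lra).
  apply lt_IZR in H. lia.
Qed.

Lemma lt_nl l : (2 <= l)%nat -> (l < nl l)%nat.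
Proof.
  intros Hl. unfold nl.
  assert (1 <= nceil (ln (INR l) ^ 2))%nat.
  { apply nceil_pos. pose proof (ln_INR_pos l Hl). simpl. nra. }
  nia.
Qed.

Lemma layer_parity l : (2 <= l)%nat -> Nat.even l = true \/ (3 <= l)%nat /\ Nat.odd l = true.
Proof.
  intros H. destruct (Nat.even l) eqn:E; [left; reflexivity|right].
  split; [destruct (Nat.eq_dec l 2) as [->|]; [discriminate|lia]|].
  rewrite <- Nat.negb_even, E. reflexivity.
Qed.

Lemma theta_pos l : (2 <= l)%nat -> 0 < theta l.
Proof.
  intros Hl. pose proof (lt_nl l Hl). pose proof PI_RGT_0.
  assert (1 <= INR (nl l - 1)) by (apply (le_INR 1); lia).
  unfold theta. apply Rdiv_lt_0_compat; lra.
Qed.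

Lemma angle_bounds l k : (2 <= l)%nat -> (k <= nl l - 1)%nat ->
  0 <= INR k * theta l <= PI / 2.
Proof.
  intros Hl Hk. pose proof (theta_pos l Hl). pose proof (lt_nl l Hl).
  assert (1 <= INR (nl l - 1)) by (apply (le_INR 1); lia).
  apply le_INR in Hk. pose proof (pos_INR k). split; [nra|].
  replace (PI / 2) with (INR (nl l - 1) * theta l) by (unfold theta; field; lra).
  nra.
Qed.

Lemma angle_sin_pos l k : (2 <= l)%nat -> (1 <= k <= nl l - 1)%nat -> 0 < sin (INR k * theta l).
Proof.
  intros Hl Hk. pose proof (angle_bounds l k Hl ltac:(lia)). pose proof (theta_pos l Hl).
  assert (1 <= INR k) by (apply (le_INR 1); lia).
  pose proof PI_RGT_0. apply sin_gt_0; nra.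
Qed.

Lemma angle_cos_nonneg l k : (2 <= l)%nat -> (k <= nl l - 1)%nat -> 0 <= cos (INR k * theta l).
Proof. intros Hl Hk. pose proof (angle_bounds l k Hl Hk). apply cos_ge_0; lra. Qed.

Lemma angle_sin_nonneg l k : (2 <= l)%nat -> (k <= nl l - 1)%nat -> 0 <= sin (INR k * theta l).
Proof.
  intros Hl Hk. pose proof (angle_bounds l k Hl Hk). pose proof PI_RGT_0.
  apply sin_ge_0; lra.
Qed.

Lemma xv_even l j : Nat.even l = true ->
  xv l j 0%nat = cos (INR j * theta l) /\ xv l j 1%nat = sin (INR j * theta l).
Proof. intros E. unfold xv. rewrite E. split; reflexivity. Qed.

Lemma xv_on_quarter_circle l j : (2 <= l)%nat -> (j < nl l)%nat ->
  0 <= xv l j 0%nat /\ 0 <= xv l j 1%nat /\ xv l j 0%nat ^ 2 + xv l j 1%nat ^ 2 = 1.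
Proof.
  intros Hl Hj.
  pose proof (angle_sin_nonneg l j Hl ltac:(lia)). pose proof (angle_cos_nonneg l j Hl ltac:(lia)).
  pose proof (sin2_cos2 (INR j * theta l)) as Hpyth. unfold Rsqr in Hpyth.
  unfold xv. destruct (Nat.even l); simpl; repeat split; lra.
Qed.

Lemma norm1_xv_bounds l j : (2 <= l)%nat -> (j < nl l)%nat -> 0 < norm1 2 (xv l j) <= 2.
Proof.
  intros Hl Hj. destruct (xv_on_quarter_circle l j Hl Hj) as [H0 [H1 H2]].
  rewrite norm1_2, !Rabs_right by lra.
  assert (xv l j 0%nat <= 1) by nra. assert (xv l j 1%nat <= 1) by nra.
  split; nra.
Qed.

Lemma sum_n_S (a : nat -> R) n : sum_n a (S n) = sum_n a n + a (S n).
Proof. rewrite sum_Sn. reflexivity. Qed.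

Lemma harm_term_eq m : (2 <= m)%nat -> harm_term m = / (INR m * ln (INR m) ^ 2).
Proof.
  intros H. unfold harm_term. replace (2 <=? m)%nat with true by (symmetry; apply Nat.leb_le, H).
  unfold Rdiv. apply Rmult_1_l.
Qed.

Lemma harm_term_small m : (m < 2)%nat -> harm_term m = 0.
Proof.
  intros H. unfold harm_term.
  replace (2 <=? m)%nat with false by (symmetry; apply Nat.leb_gt, H). reflexivity.
Qed.

Lemma harm_term_pos m : (2 <= m)%nat -> 0 < harm_term m.
Proof.
  intros H. rewrite harm_term_eq by exact H.
  pose proof (ln_INR_pos m H). pose proof (two_le_INR m H).
  apply Rinv_0_lt_compat. simpl. nra.
Qed.

Lemma harm_term_nonneg m : 0 <= harm_term m.
Proof.
  destruct (Nat.lt_ge_cases m 2) as [H|H].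
  - rewrite harm_term_small by exact H. lra.
  - apply Rlt_le, harm_term_pos, H.
Qed.

Lemma harm_term_S_le n : (2 <= n)%nat ->
  harm_term (S n) <= / ln (INR n) - / ln (INR (S n)).
Proof.
  intros Hn. rewrite harm_term_eq by lia.
  pose proof (two_le_INR n Hn). pose proof (ln_INR_pos n Hn).
  pose proof (ln_sub_ge (INR n) (INR (S n)) ltac:(lra) ltac:(rewrite S_INR; lra)) as Hd.
  rewrite S_INR in *.
  assert (ln (INR n) <= ln (INR n + 1)) by (apply ln_le; lra).
  set (N := INR n + 1) in *. set (L0 := ln (INR n)) in *. set (L1 := ln N) in *.
  assert (0 < N) by (unfold N; lra).
  replace ((N - INR n) / N) with (/ N) in Hd by (unfold N; field; lra).
  replace (/ (N * L1 ^ 2)) with (/ N * / L1 * / L1) by (field; split; lra).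
  replace (/ L0 - / L1) with ((L1 - L0) * / L0 * / L1) by (field; lra).
  assert (/ L1 <= / L0) by (apply Rinv_le_contravar; lra).
  assert (0 < / L1) by (apply Rinv_0_lt_compat; lra).
  assert (0 < / N) by (apply Rinv_0_lt_compat; lra).
  apply Rmult_le_compat_r; [lra|]. apply Rmult_le_compat; lra.
Qed.

Lemma sum_harm_term_SS_le n :
  sum_n harm_term (S (S n)) <= harm_term 2 + / ln 2 - / ln (INR (S (S n))).
Proof.
  induction n as [|n IH].
  - rewrite !sum_n_S, sum_O, (harm_term_small 0), (harm_term_small 1) by lia.
    change (INR 2) with (1 + 1). replace (1 + 1) with 2 by ring. lra.
  - rewrite sum_n_S.
    pose proof (harm_term_S_le (S (S n)) ltac:(lia)). lra.
Qed.

Lemma sum_harm_term_le n : sum_n harm_term n <= harm_term 2 + / ln 2.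
Proof.
  assert (Hln2 : 0 < ln 2) by (rewrite <- ln_1; apply ln_increasing; lra).
  pose proof (Rinv_0_lt_compat _ Hln2). pose proof (harm_term_pos 2 (le_n 2)).
  destruct n as [|[|n]].
  - rewrite sum_O, harm_term_small by lia. lra.
  - rewrite sum_n_S, sum_O, !harm_term_small by lia. lra.
  - pose proof (sum_harm_term_SS_le n).
    pose proof (Rinv_0_lt_compat _ (ln_INR_pos (S (S n)) ltac:(lia))). lra.
Qed.

Lemma alpha_pos : 0 < alpha.
Proof.
  assert (Hincr : forall n, sum_n harm_term n <= sum_n harm_term (S n)).
  { intros n. rewrite sum_n_S. pose proof (harm_term_nonneg (S n)). lra. }
  destruct (ex_finite_lim_seq_incr _ _ Hincr sum_harm_term_le) as [s Hs].
  unfold alpha, Series. rewrite (is_lim_seq_unique _ _ Hs). simpl.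
  pose proof (is_lim_seq_incr_compare _ _ Hs Hincr 2) as H.
  rewrite !sum_n_S, sum_O, (harm_term_small 0), (harm_term_small 1) in H by lia.
  pose proof (harm_term_pos 2 (le_n 2)). lra.
Qed.

Lemma zl_le a b : (a <= b)%nat -> zl a <= zl b.
Proof.
  intros H. unfold zl. apply Rmult_le_compat_l.
  - apply Rlt_le, Rinv_0_lt_compat, alpha_pos.
  - apply rsum_le_n; [apply harm_term_nonneg|lia].
Qed.

Lemma zl_nonneg a : 0 <= zl a.
Proof.
  unfold zl. apply Rmult_le_pos; [apply Rlt_le, Rinv_0_lt_compat, alpha_pos|].
  apply rsum_nonneg, harm_term_nonneg.
Qed.

Lemma delta_eq l : (1 <= l)%nat -> delta l = harm_term l / alpha.
Proof.
  intros H. unfold delta, zl. replace (S (l - 1)) with l by lia.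
  simpl rsum at 1. pose proof alpha_pos. field. lra.
Qed.

Lemma delta_nonneg l : (1 <= l)%nat -> 0 <= delta l.
Proof.
  intros H. rewrite delta_eq by exact H. pose proof alpha_pos. pose proof (harm_term_nonneg l).
  apply Rdiv_le_0_compat; lra.
Qed.

Lemma zlj_lt l j : (S j < nl l)%nat -> zlj l j = 1 - delta l * cot (INR (S j) * theta l).
Proof. intros H. unfold zlj. apply Nat.ltb_lt in H. rewrite H. reflexivity. Qed.

Lemma zlj_ge l j : (nl l <= S j)%nat -> zlj l j = 1.
Proof. intros H. unfold zlj. apply Nat.ltb_ge in H. rewrite H. reflexivity. Qed.

Lemma zlj_le_1 l j : (2 <= l)%nat -> zlj l j <= 1.
Proof.
  intros Hl. destruct (Nat.lt_ge_cases (S j) (nl l)) as [H|H]; [|rewrite zlj_ge by exact H; lra].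
  rewrite zlj_lt by exact H.
  pose proof (angle_sin_pos l (S j) Hl ltac:(lia)).
  pose proof (angle_cos_nonneg l (S j) Hl ltac:(lia)).
  pose proof (delta_nonneg l ltac:(lia)).
  assert (0 <= cot (INR (S j) * theta l)) by (apply Rdiv_le_0_compat; lra).
  nra.
Qed.

(** * Gaps on even layers *)

(* The value [0] for [j = nl l - 1], where [z_(l,j) = 1], only records nonnegativity. *)
Definition even_gap_lb (l j : nat) : R :=
  if (S j <? nl l)%nat then delta l / INR (S j) else 0.

Lemma inv_INR_S_le_cos_sub_sin_cot l j : (2 <= l)%nat -> (S j < nl l)%nat ->
  / INR (S j) <= cos (INR j * theta l) - sin (INR j * theta l) * cot (INR (S j) * theta l).
Proof.
  intros Hl Hj. pose proof (theta_pos l Hl).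
  pose proof (angle_bounds l (S j) Hl ltac:(lia)).
  assert (Hsb : 0 < sin (INR (S j) * theta l)) by (apply angle_sin_pos; lia).
  assert (Hst : 0 < sin (theta l)).
  { pose proof (angle_sin_pos l 1 Hl ltac:(lia)) as Hs1. simpl INR in Hs1. rewrite Rmult_1_l in Hs1. exact Hs1. }
  assert (Eb : INR (S j) * theta l = INR j * theta l + theta l) by (rewrite S_INR; ring).
  rewrite Eb, cos_sub_sin_cot, <- Eb by (rewrite <- Eb; lra).
  pose proof (sin_INR_mult_le (S j) (theta l) ltac:(lra) ltac:(lra)).
  assert (0 < INR (S j)) by (apply lt_0_INR; lia).
  replace (/ INR (S j)) with (sin (theta l) / (INR (S j) * sin (theta l))) by (field; lra).
  apply Rmult_le_compat_l; [lra|]. apply Rinv_le_contravar; lra.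
Qed.

Lemma even_gap_lb_le_prev_layer l j p0 p1 : (2 <= l)%nat -> (j < nl l)%nat ->
  p0 <= zl (l - 1) -> p1 <= 1 ->
  even_gap_lb l j <= (zl l - p0) * cos (INR j * theta l) + (zlj l j - p1) * sin (INR j * theta l).
Proof.
  intros Hl Hj H0 H1.
  pose proof (angle_cos_nonneg l j Hl ltac:(lia)). pose proof (angle_sin_nonneg l j Hl ltac:(lia)).
  pose proof (delta_nonneg l ltac:(lia)).
  assert (Ed : zl l = delta l + zl (l - 1)) by (unfold delta; ring).
  set (c := cos (INR j * theta l)) in *. set (s := sin (INR j * theta l)) in *.
  assert (delta l * c + (zlj l j - 1) * s <= (zl l - p0) * c + (zlj l j - p1) * s) by nra.
  unfold even_gap_lb. destruct (S j <? nl l)%nat eqn:Hlt.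
  - apply Nat.ltb_lt in Hlt. rewrite zlj_lt in * by exact Hlt.
    pose proof (inv_INR_S_le_cos_sub_sin_cot l j Hl Hlt) as Hkey. fold c s in Hkey.
    unfold Rdiv. nra.
  - apply Nat.ltb_ge in Hlt. rewrite zlj_ge in * by exact Hlt. nra.
Qed.

Lemma even_gap_lb_le_same_layer l j j1 : (2 <= l)%nat -> (j1 < j)%nat -> (j < nl l)%nat ->
  even_gap_lb l j <= (zlj l j - zlj l j1) * sin (INR j * theta l).
Proof.
  intros Hl Hj1 Hj. pose proof (angle_sin_nonneg l j Hl ltac:(lia)).
  unfold even_gap_lb. destruct (S j <? nl l)%nat eqn:Hlt.
  2:{ apply Nat.ltb_ge in Hlt. rewrite zlj_ge by exact Hlt.
      pose proof (zlj_le_1 l j1 Hl). nra. }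
  apply Nat.ltb_lt in Hlt. rewrite !zlj_lt by lia.
  pose proof (inv_INR_S_le_cos_sub_sin_cot l j Hl Hlt).
  pose proof (delta_nonneg l ltac:(lia)). pose proof PI_RGT_0.
  assert (Hs : 0 < sin (INR j * theta l)) by (apply angle_sin_pos; lia).
  assert (Hcot : cot (INR j * theta l) <= cot (INR (S j1) * theta l)).
  { pose proof (angle_bounds l j Hl ltac:(lia)). pose proof (theta_pos l Hl).
    apply cot_antitone.
    - pose proof (angle_sin_pos l (S j1) Hl ltac:(lia)).
      assert (0 < INR (S j1)) by (apply lt_0_INR; lia). nra.
    - apply Rmult_le_compat_r; [lra|]. apply le_INR; lia.
    - lra. }
  assert (Hsc : sin (INR j * theta l) * cot (INR j * theta l) = cos (INR j * theta l))
    by (unfold cot; field; lra).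
  assert (cos (INR j * theta l) - sin (INR j * theta l) * cot (INR (S j) * theta l)
          <= (cot (INR (S j1) * theta l) - cot (INR (S j) * theta l)) * sin (INR j * theta l))
    by nra.
  unfold Rdiv. nra.
Qed.

(** * Gaps of an admissible menu *)

Section AdmissibleMenu.
Variable q : nat -> nat -> nat -> R.
Hypothesis Hq : q_admissible q.

Lemma q_below_layer l j : (2 <= l)%nat -> (j < nl l)%nat ->
  q l j 0%nat <= zl l /\ q l j 1%nat <= 1.
Proof.
  destruct Hq as [Hev Hod]. revert j.
  induction l as [l IH] using (well_founded_induction Wf_nat.lt_wf). intros j Hl Hj.
  destruct (layer_parity l Hl) as [E|[H3 O]].
  - rewrite (Hev l j Hl E Hj). unfold qeven, vec2. split; [lra|]. apply zlj_le_1, Hl.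
  - destruct (Hod l j H3 O Hj) as [l' [j' [Hl' [Hll' [Hj' [-> _]]]]]].
    destruct (IH l' Hll' j' Hl' Hj'). pose proof (zl_le l' l ltac:(lia)). lra.
Qed.

Lemma odd_q_max l j l1 j1 : (3 <= l)%nat -> Nat.odd l = true -> (j < nl l)%nat ->
  (2 <= l1 <= l)%nat -> (j1 < nl l1)%nat ->
  dotk 2 (xv l j) (q l1 j1) <= dotk 2 (xv l j) (q l j).
Proof.
  destruct Hq as [_ Hod]. intros H3 O Hj Hl1 Hj1.
  destruct (Hod l j H3 O Hj) as [l' [j' [_ [_ [_ [-> Hmax]]]]]].
  destruct (Nat.lt_ge_cases l1 l) as [Hlt|Hge]; [apply Hmax; lia|].
  replace l1 with l in * by lia.
  destruct (Hod l j1 H3 O Hj1) as [l2 [j2 [Hl2 [Hll2 [Hj2 [-> _]]]]]].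
  apply Hmax; assumption.
Qed.

Lemma gap_odd_nonneg i l j : Defs.pos i = (l, j) -> (3 <= l)%nat -> Nat.odd l = true ->
  0 <= gap 2 Xseq (Qseq q) (S i).
Proof.
  intros E H3 O. destruct (pos_spec _ _ _ E) as [Hl [Hj _]].
  rewrite (gap_at q i l j E). apply fmin_glb. intros [|i1] Hi1.
  - (* [q_0 = 0] is beaten by the offered point (z_2, 1) >= 0 *)
    destruct Hq as [Hev _]. pose proof (lt_nl 2 (le_n 2)).
    pose proof (odd_q_max l j 2 (nl 2 - 1) H3 O Hj ltac:(lia) ltac:(lia)) as M.
    rewrite (Hev 2%nat (nl 2 - 1)%nat (le_n 2) eq_refl ltac:(lia)) in M.
    unfold qeven, vec2 in M. rewrite zlj_ge in M by lia.
    destruct (xv_on_quarter_circle l j Hl Hj) as [x0 [x1 _]].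
    pose proof (zl_nonneg 2). rewrite !dotk_2 in *. simpl. nra.
  - destruct (Defs.pos i1) as [l1 j1] eqn:E1. rewrite (Qseq_S q i1 l1 j1 E1).
    destruct (pos_lt_lex i l j i1 l1 j1 E E1 ltac:(lia)) as [Hl1 [Hj1 Hlex]].
    pose proof (odd_q_max l j l1 j1 H3 O Hj ltac:(lia) Hj1) as M.
    rewrite !dotk_2 in *. lra.
Qed.

Lemma gap_even_ge i l j : Defs.pos i = (l, j) -> Nat.even l = true ->
  even_gap_lb l j <= gap 2 Xseq (Qseq q) (S i).
Proof.
  intros E Ev. destruct Hq as [Hev _]. destruct (pos_spec _ _ _ E) as [Hl [Hj _]].
  rewrite (gap_at q i l j E). apply fmin_glb. intros [|i1] Hi1;
    rewrite dotk_2, (proj1 (xv_even l j Ev)), (proj2 (xv_even l j Ev)),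
      (Hev l j Hl Ev Hj); unfold qeven, vec2 at 1 2.
  - apply even_gap_lb_le_prev_layer; auto; simpl; [apply zl_nonneg|lra].
  - destruct (Defs.pos i1) as [l1 j1] eqn:E1. rewrite (Qseq_S q i1 l1 j1 E1).
    destruct (pos_lt_lex i l j i1 l1 j1 E E1 ltac:(lia)) as [Hl1 [Hj1 [Hlt|[-> Hjj]]]].
    + destruct (q_below_layer l1 j1 Hl1 Hj1).
      pose proof (zl_le l1 (l - 1) ltac:(lia)).
      apply even_gap_lb_le_prev_layer; auto; lra.
    + rewrite (Hev l j1 Hl Ev Hj1). unfold qeven, vec2.
      rewrite Rminus_diag, Rmult_0_l, Rplus_0_l.
      apply even_gap_lb_le_same_layer; assumption.
Qed.

(** * Divergence of the partial sums *)

Definition menu_term (i : nat) : R := gap 2 Xseq (Qseq q) (S i) / norm1 2 (Xseq (S i)).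

Lemma menu_term_nonneg i : 0 <= menu_term i.
Proof.
  destruct (Defs.pos i) as [l j] eqn:E. destruct (pos_spec _ _ _ E) as [Hl [Hj _]].
  unfold menu_term. rewrite (Xseq_S i l j E).
  pose proof (norm1_xv_bounds l j Hl Hj). apply Rdiv_le_0_compat; [|lra].
  destruct (layer_parity l Hl) as [Ev|[H3 O]].
  - eapply Rle_trans; [|apply (gap_even_ge i l j E Ev)].
    unfold even_gap_lb. destruct (S j <? nl l)%nat; [|lra].
    apply Rdiv_le_0_compat; [apply delta_nonneg; lia|apply lt_0_INR; lia].
  - apply (gap_odd_nonneg i l j E H3 O).
Qed.

Lemma menu_term_even_ge l j : (2 <= l)%nat -> Nat.even l = true -> (j < l)%nat ->
  delta l / 2 * / INR (S j) <= menu_term (layer_start l + j).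
Proof.
  intros Hl Ev Hj. pose proof (lt_nl l Hl).
  assert (E : Defs.pos (layer_start l + j) = (l, j)) by (apply pos_layer_start; lia).
  pose proof (gap_even_ge _ l j E Ev) as Hgap.
  unfold even_gap_lb in Hgap. rewrite (proj2 (Nat.ltb_lt (S j) (nl l)) ltac:(lia)) in Hgap.
  pose proof (delta_nonneg l ltac:(lia)).
  assert (HN : 0 < INR (S j)) by (apply lt_0_INR; lia).
  assert (0 <= delta l / INR (S j)) by (apply Rdiv_le_0_compat; lra).
  unfold menu_term. rewrite (Xseq_S _ l j E).
  destruct (norm1_xv_bounds l j Hl ltac:(lia)) as [Hn0 Hn2].
  set (g := gap 2 Xseq (Qseq q) (S (layer_start l + j))) in *.
  apply (Rle_trans _ (g / 2)); [unfold Rdiv in *; lra|].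
  apply Rmult_le_compat_l; [lra|]. apply Rinv_le_contravar; lra.
Qed.

Definition layer_sum (l : nat) : R := rsum (fun j => menu_term (layer_start l + j)) (nl l).

Lemma layer_sum_nonneg l : 0 <= layer_sum l.
Proof. apply rsum_nonneg. intros; apply menu_term_nonneg. Qed.

Lemma layer_sum_even_ge l : (2 <= l)%nat -> Nat.even l = true ->
  / (4 * alpha) * (ln (ln (INR l + 2)) - ln (ln (INR l))) <= layer_sum l.
Proof.
  intros Hl Ev. pose proof (lt_nl l Hl). pose proof alpha_pos.
  pose proof (two_le_INR l Hl). pose proof (ln_INR_pos l Hl).
  assert (Hfirst : delta l / 2 * rsum (fun j => / INR (S j)) l <= layer_sum l).
  { rewrite <- rsum_scal_l. eapply Rle_trans; [|apply rsum_le_n; [intros; apply menu_term_nonneg|]].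
    - apply rsum_le_compat. intros j Hj. apply menu_term_even_ge; assumption.
    - lia. }
  assert (Hharm : ln (INR l) <= rsum (fun j => / INR (S j)) l).
  { pose proof (ln_le_harmonic l). assert (ln (INR l) <= ln (INR l + 1)) by (apply ln_le; lra).
    lra. }
  rewrite delta_eq, harm_term_eq in Hfirst by lia.
  set (w := / (INR l * ln (INR l) ^ 2) / alpha / 2) in Hfirst.
  assert (Hw : 0 <= w)
    by (apply Rlt_le; repeat apply Rdiv_lt_0_compat; try lra; apply Rinv_0_lt_compat; simpl; nra).
  assert (Hwln : w * ln (INR l) = / (4 * alpha) * (2 / (INR l * ln (INR l))))
    by (unfold w; field; lra).
  pose proof (Rmult_le_compat_l _ _ _ Hw Hharm).
  pose proof (ln_ln_add_2_sub_le l Hl).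
  assert (/ (4 * alpha) * (ln (ln (INR l + 2)) - ln (ln (INR l)))
          <= / (4 * alpha) * (2 / (INR l * ln (INR l))))
    by (apply Rmult_le_compat_l; [apply Rlt_le, Rinv_0_lt_compat|]; lra).
  lra.
Qed.

Lemma rsum_menu_term_ge K :
  / (4 * alpha) * (ln (ln (INR (2 * K + 2))) - ln (ln 2)) <= rsum menu_term (layer_start (2 * K + 2)).
Proof.
  induction K as [|K IH].
  - simpl. replace (1 + 1) with 2 by ring. rewrite Rminus_diag, Rmult_0_r. lra.
  - set (l := (2 * K + 2)%nat) in *.
    replace (2 * S K + 2)%nat with (S (S l)) by (unfold l; lia).
    rewrite (layer_start_S (S l)), (layer_start_S l), !rsum_add_n by lia.
    assert (Ev : Nat.even l = true).
    { unfold l. replace (2 * K + 2)%nat with (2 * (K + 1))%nat by lia. apply Nat.even_mul. }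
    pose proof (layer_sum_even_ge l ltac:(lia) Ev). pose proof (layer_sum_nonneg (S l)).
    unfold layer_sum in *. rewrite (layer_start_S l) in * by lia.
    replace (INR (S (S l))) with (INR l + 2) by (rewrite !S_INR; ring).
    lra.
Qed.

End AdmissibleMenu.

Theorem proposition5p8 (q : nat -> nat -> nat -> R) :
  q_admissible q -> MenuGap_is 2 Xseq (Qseq q) p_infty.
Proof.
  intros Hq. apply is_lim_seq_spec. intros M.
  pose proof alpha_pos as Ha.
  destruct (ln_ln_INR_unbounded (4 * alpha * M + ln (ln 2))) as [K HK].
  exists (layer_start (2 * K + 2)). intros n Hn.
  change (MenuGap_partial 2 Xseq (Qseq q) n) with (rsum (menu_term q) n).
  pose proof (rsum_menu_term_ge q Hq K).
  pose proof (rsum_le_n (menu_term q) _ _ (menu_term_nonneg q Hq) Hn).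
  assert (M < / (4 * alpha) * (ln (ln (INR (2 * K + 2))) - ln (ln 2))).
  { replace M with (/ (4 * alpha) * (4 * alpha * M)) at 1 by (field; lra).
    apply Rmult_lt_compat_l; [apply Rinv_0_lt_compat; lra|].
    pose proof (HK (2 * K + 2)%nat ltac:(lia)). lra. }
  lra.
Qed.
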